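(* Let $p,q$ be positive integers with $1<q<p-q$ and $\gcd(p,q)=1$, $A=\langle q,p-q\rangle$, $s\in A\setminus\{0\}$, $r$ a positive integer with $1<r<s-r$ and $\gcd(r,s)=1$, $B=\langle r,s-r\rangle$. Let $M$ be the submonoid of $\mathbb{Q}^+$ generated by all $k/r$ ($k\in A$) and all $\frac{k'}{r}(s/r)^n$ ($k'\in B$, $n\ge1$), and $(G,G^+)=(M+(-M),M)$. Then $(G,G^+)$ is order-isomorphic to a direct limit $\varinjlim((\mathbb{Z},G_i^+),f_{i,i+1})$ where each $(\mathbb{Z},G_i^+)$ is a simple component and each $f_{i,i+1}\colon(\mathbb{Z},G_i^+)\to(\mathbb{Z},G_{i+1}^+)$ is an order-embedding given by multiplication by $r$.
   Context: $\langle a_1,\dots,a_k\rangle$ is the submonoid of $\mathbb{Z}^+$ generated by the $a_i$. A simple component is a simple partially ordered abelian group of the form $(\mathbb{Z},P)$ (simple: every nonzero positive element $u$ is an order-unit, i.e. for every $x$ there is $n$ with $-nu\le x\le nu$). An order-embedding is an injective homomorphism $f$ with $f(G^+)=f(G)\cap H^+$. The direct limit carries as positive cone the union of the images of the positive cones. *)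

From HB Require Import structures.
From mathcomp Require Import all_boot all_order all_algebra.
Set Implicit Arguments. Unset Strict Implicit. Unset Printing Implicit Defensive.
Import Order.TTheory GRing.Theory Num.Theory.
Local Open Scope ring_scope.

Definition nat_mon2 (a b : nat) (k : nat) : Prop :=
  exists m n : nat, k = (m * a + n * b)%N.

Inductive rat_gen_mon (S : rat -> Prop) : rat -> Prop :=
  | rgm_zero : rat_gen_mon S 0
  | rgm_gen x : S x -> rat_gen_mon S x
  | rgm_add x y : rat_gen_mon S x -> rat_gen_mon S y -> rat_gen_mon S (x + y).

(* (Z, P) is a partially ordered abelian group with positive cone P. *)
Definition po_cone (P : int -> Prop) : Prop :=
  [/\ P 0, (forall x y, P x -> P y -> P (x + y)) &
      (forall x, P x -> P (- x) -> x = 0)].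

Definition order_unit (P : int -> Prop) (u : int) : Prop :=
  forall x : int, exists n : nat, P (x + u *+ n) /\ P (u *+ n - x).

Definition simple_component (P : int -> Prop) : Prop :=
  po_cone P /\ (forall u, P u -> u != 0 -> order_unit P u).

Definition order_embedding (P Q : int -> Prop) (f : int -> int) : Prop :=
  [/\ (forall x y, f (x + y) = f x + f y),
      injective f &
      (forall y, (exists x, P x /\ f x = y) <-> ((exists x, f x = y) /\ Q y))].

(* Direct limit of a sequence ((Z, P i), f i : Z -> Z at level i -> i+1),
   realized as the quotient of the disjoint union nat * int (pairs (level, x))
   by the usual equivalence. *)
Fixpoint dl_trans (f : nat -> int -> int) (i n : nat) (x : int) : int :=
  match n with
  | 0 => x
  | n'.+1 => f (i + n')%N (dl_trans f i n' x)
  end.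

Definition dl_lift (f : nat -> int -> int) (k : nat) (a : nat * int) : int :=
  dl_trans f a.1 (k - a.1) a.2.

Definition dl_eq (f : nat -> int -> int) (a b : nat * int) : Prop :=
  exists k : nat, (a.1 <= k)%N /\ (b.1 <= k)%N /\ dl_lift f k a = dl_lift f k b.

Definition dl_add (f : nat -> int -> int) (a b : nat * int) : nat * int :=
  let k := maxn a.1 b.1 in (k, dl_lift f k a + dl_lift f k b).

Definition dl_pos (f : nat -> int -> int) (P : nat -> int -> Prop)
    (a : nat * int) : Prop :=
  exists b : nat * int, dl_eq f a b /\ P b.1 b.2.

(* The direct limit of ((Z, P i), f i) is order-isomorphic to the
   partially ordered subgroup (G, Gp) of Q: phi is a map on representatives
   which is well defined and injective on the quotient, additive, onto G,
   and maps the positive cone exactly onto Gp. *)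
Definition dl_order_iso (f : nat -> int -> int) (P : nat -> int -> Prop)
    (G Gp : rat -> Prop) : Prop :=
  exists phi : nat * int -> rat,
    [/\ (forall a b, phi a = phi b <-> dl_eq f a b),
        (forall a b, phi (dl_add f a b) = phi a + phi b),
        (forall a, G (phi a)),
        (forall g, G g -> exists a, phi a = g) &
        (forall a, dl_pos f P a <-> Gp (phi a))].

From HB Require Import structures.
From mathcomp Require Import all_boot all_order all_algebra.
Import Order.TTheory GRing.Theory Num.Theory.
From mathcomp Require Import ring zify.

Set Implicit Arguments.
Unset Strict Implicit.
Unset Printing Implicit Defensive.

(* Every generator of M has the form z / r^(i+1) with z an integer, so reading
   the element z of level i of the limit as the rational z / r^(i+1) identifies
   the limit with a subgroup of Z[1/r]; multiplication by r does not change the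
   value.  The level-i cone is {z | z / r^(i+1) in M}, and it contains all large
   integers: at level 0 because q and p - q are coprime, so <q, p - q> is
   cofinite; at level i >= 1 because it contains r^i <q, p - q> and
   s^i <r, s - r>, which are cofinite in r^i N and s^i N, with r^i and s^i
   coprime.  A cone of nonnegative integers containing all large integers is
   simple, and every element of Z[1/r] is then a difference of elements of M. *)

Lemma coprime_subr (p q : nat) : (q <= p)%N -> coprime p q -> coprime q (p - q).
Proof. by move=> le_qp cpq; rewrite /coprime -gcdnDr subnK // gcdnC. Qed.

Lemma nat_mon2_ge (a b n : nat) :
  coprime a b -> (0 < a)%N -> (a * b <= n)%N -> nat_mon2 a b n.
Proof.
move=> cab a_gt0 le_abn.
pose y := (n * (egcdn b a).1) %% a.
have yb_n : (y * b = n %[mod a])%N.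
  have := chinese_modl cab n 0; rewrite /chinese mul0n addn0 => <-.
  by rewrite modnMml mulnAC.
have le_ybn : (y * b <= n)%N.
  by apply: leq_trans le_abn; rewrite leq_mul2r ltnW ?orbT // ltn_mod.
have /dvdnP[x def_x] : (a %| n - y * b)%N by rewrite -eqn_mod_dvd // yb_n.
by exists x, y; rewrite -def_x subnK.
Qed.

Section AddClosed.

Variable N : nat -> Prop.
Hypotheses (N0 : N 0%N) (ND : forall x y, N x -> N y -> N (x + y)%N).

Lemma add_closed_mull a x : N a -> N (x * a)%N.
Proof. by move=> Na; elim: x => [|x IHx]; rewrite ?mul0n // mulSn; apply: ND. Qed.

Lemma add_closed_nat_mon2 a b n : N a -> N b -> nat_mon2 a b n -> N n.
Proof. by move=> Na Nb [u [v ->]]; apply: ND; apply: add_closed_mull. Qed.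

Lemma add_closed_multiples_ge a b g x : coprime a b -> (0 < a)%N ->
  N (a * g)%N -> N (b * g)%N -> (a * b <= x)%N -> N (x * g)%N.
Proof.
move=> cab a_gt0 Nag Nbg /(nat_mon2_ge cab a_gt0)[u [v ->]].
by rewrite mulnDl -!mulnA; apply: add_closed_nat_mon2 Nag Nbg _; exists u, v.
Qed.

Lemma add_closed_cofinite g h K1 K2 : coprime g h -> (0 < g)%N ->
  (forall x, (K1 <= x)%N -> N (x * g)%N) -> (forall y, (K2 <= y)%N -> N (y * h)%N) ->
  exists T, forall n, (T <= n)%N -> N n.
Proof.
move=> cgh g_gt0 Ng Nh; exists (K1 * g + K2 * h + g * h)%N => n le_Tn.
have [u [v def_n]] : nat_mon2 g h (n - (K1 * g + K2 * h)).
  by apply: nat_mon2_ge => //; lia.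
have -> : n = ((u + K1) * g + (v + K2) * h)%N by rewrite !mulnDl; lia.
by apply: ND; [apply: Ng | apply: Nh]; lia.
Qed.

End AddClosed.

Local Open Scope ring_scope.

Definition dl_scale (r : nat) : nat -> int -> int := fun _ x => r%:Z * x.

(* Level i of the limit has denominator r^(i+1), so that the generators k / r
   of M sit at level 0. *)
Definition dl_rat (r : nat) (a : nat * int) : rat := a.2%:~R / r%:R ^+ a.1.+1.

Section ScaledRationals.

Variable r : nat.
Hypothesis r_gt0 : (0 < r)%N.

Let r_neq0 : r%:R != 0 :> rat. Proof. by rewrite pnatr_eq0 -lt0n. Qed.

Lemma dl_trans_scale i n x : dl_trans (dl_scale r) i n x = r%:Z ^+ n * x.
Proof. by elim: n => [|n IHn] /=; rewrite ?mul1r // /dl_scale IHn exprS mulrA. Qed.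

Lemma dl_rat_nat i (m : nat) : dl_rat r (i, m%:Z) = m%:R / r%:R ^+ i.+1.
Proof. by []. Qed.

Lemma dl_rat0 i : dl_rat r (i, 0) = 0.
Proof. by rewrite /dl_rat mul0r. Qed.

Lemma dl_ratD i x y : dl_rat r (i, x + y) = dl_rat r (i, x) + dl_rat r (i, y).
Proof. by rewrite /dl_rat /= rmorphD mulrDl. Qed.

Lemma dl_ratB i x y : dl_rat r (i, x - y) = dl_rat r (i, x) - dl_rat r (i, y).
Proof. by rewrite /dl_rat /= rmorphB mulrBl. Qed.

Lemma dl_rat_scale i x : dl_rat r (i.+1, r%:Z * x) = dl_rat r (i, x).
Proof. by rewrite /dl_rat /= rmorphM /= exprS invfM mulrACA divff // mul1r. Qed.

Lemma dl_rat_scaleX n i x : dl_rat r ((n + i)%N, r%:Z ^+ n * x) = dl_rat r (i, x).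
Proof.
by elim: n => [|n IHn]; rewrite ?add0n ?mul1r // exprS -mulrA addSn dl_rat_scale.
Qed.

Lemma dl_rat_lift k a : (a.1 <= k)%N -> dl_rat r (k, dl_lift (dl_scale r) k a) = dl_rat r a.
Proof.
case: a => j z /= le_jk; rewrite /dl_lift dl_trans_scale /=.
by move: (k - j)%N (subnK le_jk) => n <-; apply: dl_rat_scaleX.
Qed.

Lemma dl_rat_natXn (k s n : nat) :
  dl_rat r (n, (k * s ^ n)%N%:Z) = k%:R / r%:R * (s%:R / r%:R) ^+ n.
Proof. by rewrite dl_rat_nat natrM natrX exprSr expr_div_n invfM; ring. Qed.

Lemma dl_rat_inj i x y : dl_rat r (i, x) = dl_rat r (i, y) -> x = y.
Proof.
by move/(mulIf (invr_neq0 (expf_neq0 i.+1 r_neq0)))/intr_inj.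
Qed.

Lemma dl_ratP a b : dl_rat r a = dl_rat r b <-> dl_eq (dl_scale r) a b.
Proof.
have [le_ak le_bk] : (a.1 <= maxn a.1 b.1)%N /\ (b.1 <= maxn a.1 b.1)%N.
  by rewrite leq_maxl leq_maxr.
split=> [eq_ab | [k [le_a [le_b eq_ab]]]].
  exists (maxn a.1 b.1); do 2!split=> //.
  by apply: (@dl_rat_inj (maxn a.1 b.1)); rewrite !dl_rat_lift.
by rewrite -(dl_rat_lift le_a) -(dl_rat_lift le_b) eq_ab.
Qed.

Lemma dl_rat_add a b : dl_rat r (dl_add (dl_scale r) a b) = dl_rat r a + dl_rat r b.
Proof. by rewrite /dl_add dl_ratD !dl_rat_lift ?leq_maxl ?leq_maxr. Qed.

Lemma dl_ratN a : dl_rat r (a.1, - a.2) = - dl_rat r a.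
Proof. by rewrite -[- a.2]sub0r dl_ratB dl_rat0 sub0r; case: a. Qed.

Lemma rat_gen_mon_dl_rat (S : rat -> Prop) :
  (forall x, S x -> exists a, x = dl_rat r a) ->
  forall x, rat_gen_mon S x -> exists a, x = dl_rat r a.
Proof.
move=> S_dl_rat x; elim=> [|y /S_dl_rat //|y z _ [a ->] _ [b ->]].
  by exists (0%N, 0); rewrite dl_rat0.
by exists (dl_add (dl_scale r) a b); rewrite dl_rat_add.
Qed.

End ScaledRationals.

Lemma rat_gen_mon_ge0 (S : rat -> Prop) :
  (forall x, S x -> 0 <= x) -> forall x, rat_gen_mon S x -> 0 <= x.
Proof. by move=> S_ge0 x; elim=> [|y /S_ge0|y z _ y_ge0 _ z_ge0] //; apply: addr_ge0. Qed.

Lemma simple_component_cofinal (P : int -> Prop) :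
  P 0 -> (forall x y, P x -> P y -> P (x + y)) -> (forall x, P x -> 0 <= x) ->
  (exists T, forall z, T <= z -> P z) -> simple_component P.
Proof.
move=> P0 PD P_ge0 [T PT]; split.
  split=> // x Px Pnx; apply/eqP; rewrite eq_le P_ge0 // andbT -oppr_ge0; exact: P_ge0.
move=> u Pu u_neq0 x.
have u_gt0 : 0 < u by rewrite lt_def u_neq0 P_ge0.
exists (`|T| + `|x|)%N; rewrite -mulr_natr natz PoszD !abszE.
have := ler_norm x; have := ler_norm (- x); have := ler_norm T; rewrite normrN.
by split; apply: PT; nia.
Qed.

Lemma cofinal_nat_int (P : int -> Prop) (T : nat) :
  (forall m : nat, (T <= m)%N -> P m%:Z) -> exists T : int, forall z, T <= z -> P z.
Proof.
move=> PT; exists T%:Z => -[m | //]; rewrite lez_nat; exact: PT.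
Qed.

Lemma order_embedding_mul (P Q : int -> Prop) (c : int) : c != 0 ->
  (forall x, Q (c * x) <-> P x) -> order_embedding P Q (fun x => c * x).
Proof.
move=> c_neq0 QP; split; [exact: mulrDr | exact: mulfI |] => y.
split=> [[x [Px <-]] | [[x <-] /QP Px]]; last by exists x.
by split; [exists x | apply/QP].
Qed.

Definition level_cone (r : nat) (M : rat -> Prop) (i : nat) (x : int) : Prop :=
  M (dl_rat r (i, x)).

Section CofinalMonoid.

Variables (r : nat) (M : rat -> Prop).
Hypotheses (r_gt0 : (0 < r)%N) (M0 : M 0) (MD : forall x y, M x -> M y -> M (x + y)).
Hypotheses (M_ge0 : forall x, M x -> 0 <= x)
  (M_dl_rat : forall x, M x -> exists a, x = dl_rat r a)
  (M_cofinal : forall i, exists T : int, forall z, T <= z -> M (dl_rat r (i, z))).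

Lemma level_cone_simple i : simple_component (level_cone r M i).
Proof.
apply: simple_component_cofinal (M_cofinal i) => [|x y|x /M_ge0].
- by rewrite /level_cone dl_rat0.
- by rewrite /level_cone dl_ratD; apply: MD.
- by rewrite /dl_rat /= pmulr_lge0 ?invr_gt0 ?exprn_gt0 ?ltr0n // ler0z.
Qed.

Lemma level_cone_embedding i :
  order_embedding (level_cone r M i) (level_cone r M i.+1) (fun x => r%:Z * x).
Proof.
apply: order_embedding_mul => [|x]; first by rewrite eqz_nat -lt0n.
by rewrite /level_cone dl_rat_scale.
Qed.

Definition monoid_diff (g : rat) : Prop := exists m1 m2, M m1 /\ M m2 /\ g = m1 - m2.

Lemma monoid_diff_dl_rat a : monoid_diff (dl_rat r a).
Proof.
have [T MT] := M_cofinal a.1; pose c := T + `|a.2|.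
exists (dl_rat r (a.1, a.2 + c)), (dl_rat r (a.1, c)); split; [|split].
- by apply: MT; rewrite /c; have := ler_norm (- a.2); rewrite normrN; lia.
- by apply: MT; rewrite /c; have := normr_ge0 a.2; lia.
- by rewrite dl_ratD addrK -surjective_pairing.
Qed.

Lemma monoid_diff_surj g : monoid_diff g -> exists a, dl_rat r a = g.
Proof.
move=> [_ [_ [/M_dl_rat[a ->] [/M_dl_rat[b ->] ->]]]].
by exists (dl_add (dl_scale r) a (b.1, - b.2)); rewrite (dl_rat_add r_gt0) (dl_ratN r b).
Qed.

Lemma dl_pos_level_cone a : dl_pos (dl_scale r) (level_cone r M) a <-> M (dl_rat r a).
Proof.
split=> [[b [/(dl_ratP r_gt0) -> Mb]] | Ma]; first by case: b Mb.
by exists a; split; [apply/dl_ratP | case: a Ma].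
Qed.

Lemma cofinal_monoid_dl_order_iso :
  dl_order_iso (dl_scale r) (level_cone r M) monoid_diff M.
Proof.
exists (dl_rat r); split.
- exact: dl_ratP.
- exact: dl_rat_add.
- exact: monoid_diff_dl_rat.
- exact: monoid_diff_surj.
- exact: dl_pos_level_cone.
Qed.

End CofinalMonoid.

Lemma nat_mon2l a b : nat_mon2 a b a.
Proof. by exists 1%N, 0%N; rewrite mul1n mul0n addn0. Qed.

Lemma nat_mon2r a b : nat_mon2 a b b.
Proof. by exists 0%N, 1%N; rewrite mul1n mul0n. Qed.

Definition tower_gens (p q s r : nat) (x : rat) : Prop :=
  (exists k : nat, nat_mon2 q (p - q) k /\ x = k%:R / r%:R) \/
  (exists (k' n : nat), nat_mon2 r (s - r) k' /\ (1 <= n)%N /\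
      x = k'%:R / r%:R * (s%:R / r%:R) ^+ n).

Section Tower.

Variables p q s r : nat.
Hypotheses (q_gt0 : (0 < q)%N) (q_le_p : (q <= p)%N) (cop_pq : coprime p q).
Hypotheses (r_gt0 : (0 < r)%N) (r_le_s : (r <= s)%N) (cop_rs : coprime r s).

Let M := rat_gen_mon (tower_gens p q s r).

Lemma tower_gens_ge0 x : tower_gens p q s r x -> 0 <= x.
Proof.
rewrite /tower_gens => -[[k [_ ->]] | [k' [n [_ [_ ->]]]]]; first by rewrite divr_ge0.
by rewrite mulr_ge0 ?exprn_ge0 ?divr_ge0.
Qed.

Lemma tower_gens_dl_rat x : tower_gens p q s r x -> exists a, x = dl_rat r a.
Proof.
rewrite /tower_gens => -[[k [_ ->]] | [k' [n [_ [_ ->]]]]].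
  by exists (0%N, k%:Z); rewrite dl_rat_nat expr1.
by exists (n, (k' * s ^ n)%N%:Z); rewrite dl_rat_natXn.
Qed.

Lemma tower_cofinal i : exists T : int, forall z, T <= z -> M (dl_rat r (i, z)).
Proof.
pose N m := M (dl_rat r (i, m%:Z)).
have N0 : N 0%N by rewrite /N dl_rat0; apply: rgm_zero.
have ND x y : N x -> N y -> N (x + y)%N by rewrite /N PoszD dl_ratD; apply: rgm_add.
have NA k : nat_mon2 q (p - q) k -> N (k * r ^ i)%N.
  by move=> Ak; rewrite /N dl_rat_natXn divff ?expr1n ?mulr1 ?pnatr_eq0 -?lt0n //;
    apply: rgm_gen; left; exists k.
have NAr x : (q * (p - q) <= x)%N -> N (x * r ^ i)%N.
  apply: add_closed_multiples_ge => //; first exact: coprime_subr.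
    exact: NA (nat_mon2l _ _).
  exact: NA (nat_mon2r _ _).
case: i => [|i] in N N0 ND NA NAr *.
  by apply: (@cofinal_nat_int _ (q * (p - q))) => m /NAr; rewrite expn0 muln1.
have NB k : nat_mon2 r (s - r) k -> N (k * s ^ i.+1)%N.
  by move=> Bk; rewrite /N dl_rat_natXn; apply: rgm_gen; right; exists k, i.+1.
have NBs y : (r * (s - r) <= y)%N -> N (y * s ^ i.+1)%N.
  apply: add_closed_multiples_ge => //; first by rewrite coprime_subr // coprime_sym.
    exact: NB (nat_mon2l _ _).
  exact: NB (nat_mon2r _ _).
have rX_gt0 : (0 < r ^ i.+1)%N by rewrite expn_gt0 r_gt0.
have cop_rsX : coprime (r ^ i.+1) (s ^ i.+1) by rewrite coprimeXl // coprimeXr.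
have [T NT] := add_closed_cofinite ND cop_rsX rX_gt0 NAr NBs.
exact: cofinal_nat_int NT.
Qed.

End Tower.

Theorem proposition2p4 (p q s r : nat) :
  (1 < q)%N -> (q < p - q)%N -> coprime p q ->
  nat_mon2 q (p - q) s -> (s != 0)%N ->
  (1 < r)%N -> (r < s - r)%N -> coprime r s ->
  let M : rat -> Prop :=
    rat_gen_mon (fun x : rat =>
      (exists k : nat, nat_mon2 q (p - q) k /\ x = k%:R / r%:R) \/
      (exists (k' n : nat), nat_mon2 r (s - r) k' /\ (1 <= n)%N /\
          x = k'%:R / r%:R * (s%:R / r%:R) ^+ n)) in
  let G : rat -> Prop := fun g => exists m1 m2, M m1 /\ M m2 /\ g = m1 - m2 in
  exists P : nat -> int -> Prop,
    [/\ (forall i, simple_component (P i)),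
        (forall i, order_embedding (P i) (P i.+1) (fun x : int => r%:Z * x)) &
        dl_order_iso (fun _ (x : int) => r%:Z * x) P G M].
Proof.
move=> q_gt1 q_lt_pq cop_pq _ _ r_gt1 r_lt_sr cop_rs M G.
have q_gt0 : (0 < q)%N by lia.
have q_le_p : (q <= p)%N by lia.
have r_gt0 : (0 < r)%N by lia.
have r_le_s : (r <= s)%N by lia.
have M_ge0 := rat_gen_mon_ge0 (@tower_gens_ge0 p q s r).
have M_dl_rat := rat_gen_mon_dl_rat r_gt0 (@tower_gens_dl_rat p q s r).
have M_cofinal := tower_cofinal q_gt0 q_le_p cop_pq r_gt0 r_le_s cop_rs.
exists (level_cone r M); split.
- exact: level_cone_simple r_gt0 (@rgm_zero _) (@rgm_add _) M_ge0 M_cofinal.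
- exact: level_cone_embedding r_gt0.
- exact: cofinal_monoid_dl_order_iso r_gt0 M_dl_rat M_cofinal.
Qed.
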